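(* For every sparse paving matroid $M$, the basis pair graph $G(M)$ is connected.
   Context: A matroid $M$ of rank $r$ is sparse paving if every nonspanning circuit of $M$ is a hyperplane; equivalently, every $r$-element subset of $E(M)$ is either a basis or a circuit-hyperplane. The basis pair graph $G(M)$ has as vertices the ordered triples $(A_1,A_2,A_3)$ of subsets of $E(M)$ where $A_1$ and $A_2$ are disjoint bases of $M$ and $A_3=E(M)-(A_1\cup A_2)$ ($A_3$ need not be a basis). Two vertices $(A_1,A_2,A_3)$ and $(B_1,B_2,B_3)$ are adjacent if $|A_1-B_1|+|A_2-B_2|+|A_3-B_3|=2$, i.e., one is obtained from the other by switching a pair of elements lying in two different sets of the triple. (A graph with no vertices is regarded as connected.) *)

From mathcomp Require Import all_boot.
Set Implicit Arguments. Unset Strict Implicit. Unset Printing Implicit Defensive.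

Definition matroid_bases (T : finType) (B : {set {set T}}) : Prop :=
  B != set0 /\
  forall B1 B2 x, B1 \in B -> B2 \in B -> x \in B1 :\: B2 ->
    exists2 y, y \in B2 :\: B1 & (y |: (B1 :\ x)) \in B.

Section MatroidNotions.
Variables (T : finType) (B : {set {set T}}).

Definition indep (X : {set T}) : bool := [exists Y in B, X \subset Y].

Definition rk (X : {set T}) : nat :=
  \max_(Y : {set T} | indep Y && (Y \subset X)) #|Y|.

Definition mrank : nat := rk [set: T].

Definition spanning (X : {set T}) : bool := rk X == mrank.

Definition circuit (C : {set T}) : bool :=
  ~~ indep C && [forall x in C, indep (C :\ x)].

Definition flat (F : {set T}) : bool :=
  [forall x in ~: F, rk (x |: F) > rk F].

Definition hyperplane (H : {set T}) : bool :=
  flat H && (rk H == mrank.-1) && (rk H < mrank).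

Definition sparse_paving : Prop :=
  forall C, circuit C -> ~~ spanning C -> hyperplane C.

Definition triple := ({set T} * {set T} * {set T})%type.

Definition bpg_vertex (v : triple) : bool :=
  let: (A1, A2, A3) := v in
  [&& A1 \in B, A2 \in B, [disjoint A1 & A2] & A3 == ~: (A1 :|: A2)].

Definition bpg_adj (u v : triple) : bool :=
  let: (A1, A2, A3) := u in
  let: (B1, B2, B3) := v in
  #|A1 :\: B1| + #|A2 :\: B2| + #|A3 :\: B3| == 2.

Definition bpg_edge : rel triple :=
  fun u v => [&& bpg_vertex u, bpg_vertex v & bpg_adj u v].

Definition bpg_connected : Prop :=
  forall u v, bpg_vertex u -> bpg_vertex v -> connect bpg_edge u v.

End MatroidNotions.

From mathcomp Require Import all_boot.
Set Implicit Arguments. Unset Strict Implicit. Unset Printing Implicit Defensive.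

(* In a sparse paving matroid of rank r, an r-set N that is not a basis is a
   circuit-hyperplane, and every set obtained from N by one exchange is a basis.
   Hence whenever switching an element fails to produce a basis, every further
   single exchange of the resulting set succeeds; this repairs all failed moves.
   Fix a target vertex (B1, B2, B3).  From a vertex (A1, A2, A3) with A1 <> B1,
   at most three switches lead to a vertex whose first set shares more elements
   with B1 (the cases depend on whether B1 - A1 meets A3 and on whether A1 - B1
   is a singleton).  Once A1 = B1, basis exchange from A2 towards B2 through A3
   reaches the target. *)

Ltac rewrite_bool_hyps := repeat (match goal with
  | H : is_true (~~ (?a == ?b)) |- context [?b == ?a] => rewrite (eq_sym b a) (negbTE H)
  | H : is_true (~~ ?b) |- context [?b] => rewrite (negbTE H)
  | H : is_true ?b |- context [?b] => rewrite H
  end; simpl).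

Ltac truth_table :=
  try match goal with
  | H : is_true ?b, H' : is_true (~~ ?b) |- _ => by move: H'; rewrite H
  | H : is_true (~~ (?a == ?a)) |- _ => by move: H; rewrite eqxx
  end;
  rewrite_bool_hyps; rewrite ?eqxx /=;
  repeat match goal with |- context [?x \in ?S] => case: (x \in S) end;
  repeat match goal with |- context [?x == ?y] => case: (x == y) end; by [].

(* Splits the generic element [e] along the disjoint pairs in context and along
   the named elements it may equal, then decides the remaining boolean identity
   from the membership and distinctness hypotheses in context. *)
Ltac elem_cases e :=
  repeat match goal with
  | D : is_true [disjoint ?A & ?C] |- context [e \in ?A] =>
      let h := fresh in case: (boolP (e \in A)) => h; [rewrite ?(disjointFr D h) |]
  end;
  repeat match goal with |- context [e == ?a] =>
    let E := fresh in case: (e =P a) => [E|_]; [subst e |] end;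
  truth_table.

Ltac set_eq := let e := fresh "e" in apply/setP => e; rewrite ?inE; elem_cases e.
Ltac set_sub := let e := fresh "e" in
  apply/subsetP => e; rewrite ?inE; apply/implyP; elem_cases e.
Ltac set_mem := rewrite ?inE; truth_table.

Lemma card_setU1D1 (T : finType) (A : {set T}) x y :
  x \in A -> y \notin A -> #|y |: (A :\ x)| = #|A|.
Proof. by move=> xA yA; rewrite cardsU1 !inE negb_and yA orbT (cardsD1 x A) xA. Qed.

Lemma card_lt_subD1 (T : finType) (S R : {set T}) x :
  x \in R -> S \subset R :\ x -> #|S| < #|R|.
Proof. by move=> xR /subset_leq_card; rewrite (cardsD1 x R) xR. Qed.

Section Bases.
Variables (T : finType) (B : {set {set T}}).
Hypothesis hB : matroid_bases B.

Lemma basis_card_le B1 B2 : B1 \in B -> B2 \in B -> #|B1| <= #|B2|.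
Proof.
move=> + B2B; have [n] := ubnP #|B1 :\: B2|; elim: n B1 => // n IH B1 lt B1B.
have [/subset_leq_card //|/subsetPn[x xB1 xB2]] := boolP (B1 \subset B2).
have xD : x \in B1 :\: B2 by rewrite inE xB2.
have [y /setDP[yB2 yB1] B1'B] := hB.2 B1 B2 x B1B B2B xD.
rewrite -(card_setU1D1 xB1 yB1); apply: IH B1'B; move: lt; rewrite ltnS; apply: leq_trans.
by apply: card_lt_subD1 xD _; set_sub.
Qed.

Lemma basis_card B1 B2 : B1 \in B -> B2 \in B -> #|B1| = #|B2|.
Proof. by move=> h1 h2; apply/eqP; rewrite eqn_leq !basis_card_le. Qed.

Lemma basis_subset_eq B1 B2 : B1 \in B -> B2 \in B -> B1 \subset B2 -> B1 = B2.
Proof. by move=> h1 h2 s; apply/eqP; rewrite eqEcard s (basis_card h2 h1) leqnn. Qed.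

Lemma indep0 : indep B set0.
Proof. by case: hB => /set0Pn[B0 B0B] _; apply/existsP; exists B0; rewrite B0B sub0set. Qed.

Lemma leq_card_rk (X S : {set T}) : indep B X -> X \subset S -> #|X| <= rk B S.
Proof.
by move=> hX sXS; apply: (leq_bigmax_cond (P := fun Y => indep B Y && (Y \subset S)));
  rewrite hX.
Qed.

Lemma rk_witness (S : {set T}) : exists2 X, indep B X && (X \subset S) & rk B S = #|X|.
Proof.
have hp : 0 < #|[pred Y | indep B Y && (Y \subset S)]|.
  by apply/card_gt0P; exists set0; rewrite inE indep0 sub0set.
have [X hX e] := eq_bigmax_cond (fun Y : {set T} => #|Y|) hp.
by exists X; [move: hX; rewrite inE | exact: e].
Qed.

Lemma indep_card_le (X B0 : {set T}) : B0 \in B -> indep B X -> #|X| <= #|B0|.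
Proof.
move=> B0B /existsP[Y /andP[YB sXY]].
by rewrite -(basis_card YB B0B); apply: subset_leq_card.
Qed.

Lemma card_basis B0 : B0 \in B -> #|B0| = mrank B.
Proof.
move=> B0B; apply/eqP; rewrite eqn_leq; apply/andP; split.
  by apply: leq_card_rk (subsetT _); apply/existsP; exists B0; rewrite B0B subxx.
rewrite /mrank; have [X /andP[hX _] ->] := rk_witness setT; exact: indep_card_le B0B hX.
Qed.

Lemma indep_card_mrank (X : {set T}) : indep B X -> #|X| <= mrank B.
Proof. by move=> /existsP[Y /andP[YB sXY]]; rewrite -(card_basis YB) subset_leq_card. Qed.

Lemma indep_mrank_basis (X : {set T}) : indep B X -> #|X| = mrank B -> X \in B.
Proof.
move=> /existsP[Y /andP[YB sXY]] cX.
suff -> : X = Y by [].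
by apply/eqP; rewrite eqEcard sXY cX (card_basis YB) leqnn.
Qed.

End Bases.

Section SparsePaving.
Variables (T : finType) (B : {set {set T}}).
Hypotheses (hB : matroid_bases B) (hS : sparse_paving B).

Lemma dependent_sub_circuit (N : {set T}) :
  ~~ indep B N -> exists2 C : {set T}, C \subset N & circuit B C.
Proof.
move=> dN; have hN : (N \subset N) && ~~ indep B N by rewrite subxx.
have [C /andP[sCN dC] minC] :=
  @arg_minnP _ N (fun D => (D \subset N) && ~~ indep B D) (fun D => #|D|) hN.
exists C => //; rewrite /circuit dC; apply/forallP => x; apply/implyP => xC.
apply: contraT => dCx.
have := minC (C :\ x); rewrite dCx (subset_trans (subD1set C x) sCN) => /(_ isT).
by rewrite (cardsD1 x C) xC ltnn.
Qed.

(* A minimal dependent subset C of N is a non-spanning circuit, hence a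
   hyperplane of rank r - 1; as C is dependent this forces #|C| >= r, so C = N. *)
Lemma nonbasis_circuit_hyperplane (N : {set T}) :
  #|N| = mrank B -> N \notin B -> circuit B N /\ hyperplane B N.
Proof.
move=> cN NnB.
have dN : ~~ indep B N by apply: contra NnB => hN; exact: indep_mrank_basis hN cN.
have [C sCN circC] := dependent_sub_circuit dN.
have [X /andP[hX sXC] rkC] := rk_witness hB C.
have nspC : ~~ spanning B C.
  apply/negP => /eqP; rewrite rkC => cX.
  have : X == N by rewrite eqEcard (subset_trans sXC sCN) cN cX leqnn.
  by move/eqP=> eXN; rewrite -eXN (indep_mrank_basis hB hX cX) in NnB.
have hypC := hS circC nspC.
have ltXC : #|X| < #|C|.
  have dC : ~~ indep B C by case/andP: circC.
  apply: proper_card; rewrite properEneq sXC andbT.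
  by apply: contraNneq dC => <-.
have eCN : C = N.
  apply/eqP; rewrite eqEcard sCN cN.
  have /andP[/andP[_ /eqP rkC1] _] := hypC.
  by apply: leq_trans (leqSpred _) _; rewrite -rkC1 rkC.
by rewrite -eCN.
Qed.

(* N :\ z extends to a basis t |: (N :\ z), and flatness of N yields a basis I
   inside w |: N; exchanging t for an element of I can only bring in w. *)
Lemma nonbasis_exchange (N : {set T}) z w :
  #|N| = mrank B -> N \notin B -> z \in N -> w \notin N -> w |: (N :\ z) \in B.
Proof.
move=> cN NnB zN wN; have [circN hypN] := nonbasis_circuit_hyperplane cN NnB.
have r_gt0 : 0 < mrank B by rewrite -cN; apply/card_gt0P; exists z.
have cNz : #|N :\ z| = (mrank B).-1 by rewrite -cN (cardsD1 z N) zN.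
have [I IB sIwN] : exists2 I, I \in B & I \subset w |: N.
  have [I /andP[hI sI] rkI] := rk_witness hB (w |: N).
  exists I => //; apply: (indep_mrank_basis hB hI); apply/eqP.
  rewrite eqn_leq indep_card_mrank // -rkI -(prednK r_gt0).
  have /andP[/andP[flatN /eqP <-] _] := hypN.
  by have /implyP := (forallP flatN) w; rewrite inE wN; apply.
have [B1 B1B sNzB1] : exists2 B1, B1 \in B & N :\ z \subset B1.
  by case/andP: circN => _ /forallP/(_ z)/implyP/(_ zN)/existsP[Y /andP[]]; exists Y.
have [t tB1 tNz] : exists2 t, t \in B1 & t \notin N :\ z.
  apply/subsetPn/negP => /subset_leq_card.
  by rewrite cNz (card_basis hB B1B) leqNgt ltn_predL r_gt0.
have eB1 : B1 = t |: (N :\ z).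
  apply/esym/eqP; rewrite eqEcard subUset sub1set tB1 sNzB1 cardsU1 tNz cNz.
  by rewrite (card_basis hB B1B) add1n (prednK r_gt0) leqnn.
have [<-|tw] := eqVneq t w; first by rewrite -eB1.
have tz : t != z.
  by apply: contraNneq NnB => etz; rewrite -(setD1K zN) -{1}etz -eB1.
have tI : t \notin I.
  apply: contraNN tNz => /(subsetP sIwN); rewrite !inE (negbTE tw) /= => tN.
  by rewrite tz tN.
have tD : t \in B1 :\: I by rewrite inE tI.
have [s /setDP[sI sB1] sB] := hB.2 B1 I t B1B IB tD.
rewrite eB1 setU1K // in sB.
move: (subsetP sIwN s sI); rewrite !inE => /orP[/eqP <- //|sN].
have [esz|sz] := eqVneq s z; first by rewrite esz setD1K // in sB; rewrite sB in NnB.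
by move: sB1; rewrite eB1 !inE sz sN orbT.
Qed.

Lemma basis_double_exchange (A : {set T}) x y z w :
  A \in B -> x \in A -> y \notin A -> y |: (A :\ x) \notin B ->
  z \in y |: (A :\ x) -> w \notin y |: (A :\ x) -> w |: ((y |: (A :\ x)) :\ z) \in B.
Proof.
by move=> AB xA yA; apply: nonbasis_exchange; rewrite card_setU1D1 // (card_basis hB AB).
Qed.

End SparsePaving.

Section BasisPairGraph.
Variables (T : finType) (B : {set {set T}}).
Hypotheses (hB : matroid_bases B) (hS : sparse_paving B).

Definition bpg_vtx (A1 A2 : {set T}) : triple T := (A1, A2, ~: (A1 :|: A2)).

Definition disjoint_bases (A1 A2 : {set T}) : bool :=
  [&& A1 \in B, A2 \in B & [disjoint A1 & A2]].

Local Notation linked u v := (connect (bpg_edge B) u v).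

Lemma bpg_vertex_vtx A1 A2 : bpg_vertex B (bpg_vtx A1 A2) = disjoint_bases A1 A2.
Proof. by rewrite /bpg_vertex /bpg_vtx eqxx andbT. Qed.

Lemma bpg_edge_vtx A1 A2 A1' A2' :
  disjoint_bases A1 A2 -> disjoint_bases A1' A2' ->
  #|A1 :\: A1'| + #|A2 :\: A2'| + #|~: (A1 :|: A2) :\: ~: (A1' :|: A2')| = 2 ->
  linked (bpg_vtx A1 A2) (bpg_vtx A1' A2').
Proof.
by move=> hV hV' e; apply: connect1; rewrite /bpg_edge !bpg_vertex_vtx hV hV' /= e.
Qed.

Lemma switch12_linked A1 A2 x y : disjoint_bases A1 A2 -> x \in A1 -> y \in A2 ->
  y |: (A1 :\ x) \in B -> x |: (A2 :\ y) \in B ->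
  disjoint_bases (y |: (A1 :\ x)) (x |: (A2 :\ y)) /\
  linked (bpg_vtx A1 A2) (bpg_vtx (y |: (A1 :\ x)) (x |: (A2 :\ y))).
Proof.
move=> hV xA1 yA2 A1'B A2'B; have /and3P[_ _ D] := hV.
have yA1 : y \notin A1 by rewrite (disjointFl D yA2).
have xy : x != y := memPn yA1 x xA1.
have hV' : disjoint_bases (y |: (A1 :\ x)) (x |: (A2 :\ y)).
  by rewrite /disjoint_bases A1'B A2'B -setI_eq0; apply/eqP; set_eq.
split=> //; apply: bpg_edge_vtx hV hV' _.
have -> : A1 :\: (y |: (A1 :\ x)) = [set x] by set_eq.
have -> : A2 :\: (x |: (A2 :\ y)) = [set y] by set_eq.
have -> : ~: (A1 :|: A2) :\: ~: ((y |: (A1 :\ x)) :|: (x |: (A2 :\ y))) = set0 by set_eq.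
by rewrite !cards1 cards0.
Qed.

Lemma switch13_linked A1 A2 x y : disjoint_bases A1 A2 -> x \in A1 ->
  y \notin A1 -> y \notin A2 -> y |: (A1 :\ x) \in B ->
  disjoint_bases (y |: (A1 :\ x)) A2 /\
  linked (bpg_vtx A1 A2) (bpg_vtx (y |: (A1 :\ x)) A2).
Proof.
move=> hV xA1 yA1 yA2 A1'B; have /and3P[_ A2B D] := hV.
have xy : x != y := memPn yA1 x xA1.
have hV' : disjoint_bases (y |: (A1 :\ x)) A2.
  by rewrite /disjoint_bases A1'B A2B -setI_eq0; apply/eqP; set_eq.
split=> //; apply: bpg_edge_vtx hV hV' _.
have -> : A1 :\: (y |: (A1 :\ x)) = [set x] by set_eq.
have -> : ~: (A1 :|: A2) :\: ~: ((y |: (A1 :\ x)) :|: A2) = [set y] by set_eq.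
by rewrite setDv !cards1 cards0.
Qed.

Lemma switch23_linked A1 A2 x y : disjoint_bases A1 A2 -> x \in A2 ->
  y \notin A1 -> y \notin A2 -> y |: (A2 :\ x) \in B ->
  disjoint_bases A1 (y |: (A2 :\ x)) /\
  linked (bpg_vtx A1 A2) (bpg_vtx A1 (y |: (A2 :\ x))).
Proof.
move=> hV xA2 yA1 yA2 A2'B; have /and3P[A1B _ D] := hV.
have xy : x != y := memPn yA2 x xA2.
have hV' : disjoint_bases A1 (y |: (A2 :\ x)).
  by rewrite /disjoint_bases A1B A2'B -setI_eq0; apply/eqP; set_eq.
split=> //; apply: bpg_edge_vtx hV hV' _.
have -> : A2 :\: (y |: (A2 :\ x)) = [set x] by set_eq.
have -> : ~: (A1 :|: A2) :\: ~: (A1 :|: (y |: (A2 :\ x))) = [set y] by set_eq.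
by rewrite setDv !cards1 cards0.
Qed.

Section TowardsTarget.
Variables B1 B2 : {set T}.
Hypothesis hVB : disjoint_bases B1 B2.

Definition improvable A1 A2 := exists A1' A2', [/\ disjoint_bases A1' A2',
  linked (bpg_vtx A1 A2) (bpg_vtx A1' A2') & #|A1' :\: B1| < #|A1 :\: B1|].

Lemma improvable_linked A1 A2 A2' :
  linked (bpg_vtx A1 A2) (bpg_vtx A1 A2') -> improvable A1 A2' -> improvable A1 A2.
Proof.
move=> c [A1' [A2'' [hV' c' lt]]]; exists A1', A2''; split=> //.
exact: connect_trans c c'.
Qed.

Lemma improvable_switch13 A1 A2 x y : disjoint_bases A1 A2 -> x \in A1 -> x \notin B1 ->
  y \in B1 -> y \notin A1 -> y \notin A2 -> y |: (A1 :\ x) \in B -> improvable A1 A2.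
Proof.
move=> hV xA1 xB1 yB1 yA1 yA2 A1'B; have [hV' c] := switch13_linked hV xA1 yA1 yA2 A1'B.
have xy : x != y := memPn yA1 x xA1.
exists (y |: (A1 :\ x)), A2; split=> //.
by apply: (@card_lt_subD1 _ _ _ x); [rewrite inE xB1 | set_sub].
Qed.

Lemma improvable_switch12 A1 A2 x y : disjoint_bases A1 A2 -> x \in A1 -> x \notin B1 ->
  y \in A2 -> y \in B1 -> y |: (A1 :\ x) \in B -> x |: (A2 :\ y) \in B -> improvable A1 A2.
Proof.
move=> hV xA1 xB1 yA2 yB1 A1'B A2'B; have [hV' c] := switch12_linked hV xA1 yA2 A1'B A2'B.
have yA1 : y \notin A1 by case/and3P: hV => _ _ /disjointFl/(_ yA2) ->.
have xy : x != y := memPn yA1 x xA1.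
exists (y |: (A1 :\ x)), (x |: (A2 :\ y)); split=> //.
by apply: (@card_lt_subD1 _ _ _ x); [rewrite inE xB1 | set_sub].
Qed.


Lemma improvable_unused A1 A2 x y : disjoint_bases A1 A2 -> x \in A1 -> x \notin B1 ->
  y \in B1 -> y \notin A1 -> y \notin A2 -> improvable A1 A2.
Proof.
move=> hV xA1 xB1 yB1 yA1 yA2; have /and3P[A1B _ _] := hV; have /and3P[B1B _ _] := hVB.
have [|N] := boolP (y |: (A1 :\ x) \in B); first exact: improvable_switch13.
have [e eN eB1] : exists2 e, e \in y |: (A1 :\ x) & e \notin B1.
  apply/subsetPn; apply: contra N => sub.
  suff /eqP -> : y |: (A1 :\ x) == B1 by [].
  by rewrite eqEcard sub card_setU1D1 // (basis_card hB A1B B1B) leqnn.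
move: eN; rewrite !inE => /orP[/eqP eY|/andP[ex eA1]]; first by rewrite eY yB1 in eB1.
apply: (improvable_switch13 hV eA1 eB1 yB1 yA1 yA2).
have xy : x != y := memPn yA1 x xA1.
have ey : e != y := memPn yA1 e eA1.
have -> : y |: (A1 :\ e) = x |: ((y |: (A1 :\ x)) :\ e) by set_eq.
by apply: (basis_double_exchange hB hS) => //; set_mem.
Qed.

Section TwoOutside.
Variables (A1 A2 : {set T}) (x0 x1 y0 y1 : T).
Hypotheses (hV : disjoint_bases A1 A2) (x0A1 : x0 \in A1) (x1A1 : x1 \in A1)
  (x0B1 : x0 \notin B1) (x1B1 : x1 \notin B1) (x01 : x0 != x1)
  (y0A2 : y0 \in A2) (y1A2 : y1 \in A2) (y0B1 : y0 \in B1) (y1B1 : y1 \in B1) (y01 : y0 != y1).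

Let A1B : A1 \in B. Proof. by case/and3P: hV. Qed.
Let A2B : A2 \in B. Proof. by case/and3P: hV. Qed.
Let D12 : [disjoint A1 & A2]. Proof. by case/and3P: hV. Qed.
Let x0A2 : x0 \notin A2. Proof. by rewrite (disjointFr D12 x0A1). Qed.
Let x1A2 : x1 \notin A2. Proof. by rewrite (disjointFr D12 x1A1). Qed.
Let y0A1 : y0 \notin A1. Proof. by rewrite (disjointFl D12 y0A2). Qed.
Let y1A1 : y1 \notin A1. Proof. by rewrite (disjointFl D12 y1A2). Qed.
Let x0y0 : x0 != y0. Proof. exact: memPn y0A1 x0 x0A1. Qed.
Let x0y1 : x0 != y1. Proof. exact: memPn y1A1 x0 x0A1. Qed.
Let x1y0 : x1 != y0. Proof. exact: memPn y0A1 x1 x1A1. Qed.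
Let x1y1 : x1 != y1. Proof. exact: memPn y1A1 x1 x1A1. Qed.

Lemma detour_pivot : y0 |: (A1 :\ x0) \notin B -> x0 |: (A2 :\ y1) \notin B ->
  exists2 d, d \in A2 & (d != y0) && (d != y1).
Proof.
move=> N00 N01.
have [sub|/subsetPn[d dA2]] := boolP (A2 \subset [set y0; y1]); last first.
  by rewrite !inE negb_or; exists d.
have eA2 : A2 = [set y0; y1].
  by apply/eqP; rewrite eqEcard sub subset_leq_card // subUset !sub1set y0A2 y1A2.
have eA1 : A1 = [set x0; x1].
  apply/eqP; rewrite eq_sym eqEcard subUset !sub1set x0A1 x1A1 /=.
  by rewrite (basis_card hB A1B A2B) eA2 !cards2 x01 y01.
have : x1 |: ((x0 |: (A2 :\ y1)) :\ x0) \in B.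
  by apply: (basis_double_exchange hB hS) => //; set_mem.
suff -> : x1 |: ((x0 |: (A2 :\ y1)) :\ x0) = y0 |: (A1 :\ x0) by rewrite (negbTE N00).
by rewrite eA1 eA2; set_eq.
Qed.

(* Three switches through a third element d of A2: (x0, d), then (x1, y0), then (d, y1). *)
Lemma improvable_detour : y0 |: (A1 :\ x0) \notin B -> x0 |: (A2 :\ y1) \notin B ->
  x1 |: (A2 :\ y0) \notin B -> improvable A1 A2.
Proof.
move=> N00 N01 N10; have [d dA2 /andP[dy0 dy1]] := detour_pivot N00 N01.
have dA1 : d \notin A1 by rewrite (disjointFl D12 dA2).
have x0d : x0 != d := memPn dA1 x0 x0A1.
have x1d : x1 != d := memPn dA1 x1 x1A1.
have A1d : d |: (A1 :\ x0) \in B.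
  have -> : d |: (A1 :\ x0) = d |: ((y0 |: (A1 :\ x0)) :\ y0) by set_eq.
  by apply: (basis_double_exchange hB hS) => //; set_mem.
have A2d : x0 |: (A2 :\ d) \in B.
  have -> : x0 |: (A2 :\ d) = y1 |: ((x0 |: (A2 :\ y1)) :\ d) by set_eq.
  by apply: (basis_double_exchange hB hS) => //; set_mem.
have [hV1 c1] := switch12_linked hV x0A1 dA2 A1d A2d.
have A1dy0 : y0 |: ((d |: (A1 :\ x0)) :\ x1) \in B.
  have -> : y0 |: ((d |: (A1 :\ x0)) :\ x1) = d |: ((y0 |: (A1 :\ x0)) :\ x1) by set_eq.
  by apply: (basis_double_exchange hB hS) => //; set_mem.
have A2dx1 : x1 |: ((x0 |: (A2 :\ d)) :\ y0) \in B.
  have -> : x1 |: ((x0 |: (A2 :\ d)) :\ y0) = x0 |: ((x1 |: (A2 :\ y0)) :\ d) by set_eq.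
  by apply: (basis_double_exchange hB hS) => //; set_mem.
have x1in : x1 \in d |: (A1 :\ x0) by set_mem.
have y0in : y0 \in x0 |: (A2 :\ d) by set_mem.
have [hV2 c2] := switch12_linked hV1 x1in y0in A1dy0 A2dx1.
have A1' : y1 |: ((y0 |: ((d |: (A1 :\ x0)) :\ x1)) :\ d) \in B.
  have -> : y1 |: ((y0 |: ((d |: (A1 :\ x0)) :\ x1)) :\ d) =
            y1 |: ((y0 |: (A1 :\ x0)) :\ x1) by set_eq.
  by apply: (basis_double_exchange hB hS) => //; set_mem.
have A2' : d |: ((x1 |: ((x0 |: (A2 :\ d)) :\ y0)) :\ y1) \in B.
  have -> : d |: ((x1 |: ((x0 |: (A2 :\ d)) :\ y0)) :\ y1) =
            x1 |: ((x0 |: (A2 :\ y1)) :\ y0) by set_eq.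
  by apply: (basis_double_exchange hB hS) => //; set_mem.
have din : d \in y0 |: ((d |: (A1 :\ x0)) :\ x1) by set_mem.
have y1in : y1 \in x1 |: ((x0 |: (A2 :\ d)) :\ y0) by set_mem.
have [hV3 c3] := switch12_linked hV2 din y1in A1' A2'.
do 2 eexists; split; first exact: hV3.
  exact: connect_trans c1 (connect_trans c2 c3).
by apply: (@card_lt_subD1 _ _ _ x0); [rewrite inE x0B1 | set_sub].
Qed.

Lemma improvable_nonbasis_switch1 : y0 |: (A1 :\ x0) \notin B -> improvable A1 A2.
Proof.
move=> N00.
have A1x0y1 : y1 |: (A1 :\ x0) \in B.
  have -> : y1 |: (A1 :\ x0) = y1 |: ((y0 |: (A1 :\ x0)) :\ y0) by set_eq.
  by apply: (basis_double_exchange hB hS) => //; set_mem.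
have A1x1y0 : y0 |: (A1 :\ x1) \in B.
  have -> : y0 |: (A1 :\ x1) = x0 |: ((y0 |: (A1 :\ x0)) :\ x1) by set_eq.
  by apply: (basis_double_exchange hB hS) => //; set_mem.
have [A2y1x0|N01] := boolP (x0 |: (A2 :\ y1) \in B).
  exact: improvable_switch12 hV x0A1 x0B1 y1A2 y1B1 A1x0y1 A2y1x0.
have [A2y0x1|N10] := boolP (x1 |: (A2 :\ y0) \in B).
  exact: improvable_switch12 hV x1A1 x1B1 y0A2 y0B1 A1x1y0 A2y0x1.
exact: improvable_detour N00 N01 N10.
Qed.

Lemma improvable_nonbasis_switch2 :
  x0 |: (A2 :\ y0) \notin B -> y1 |: (A1 :\ x0) \in B -> improvable A1 A2.
Proof.
move=> N00 A1x0y1.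
apply: improvable_switch12 hV x0A1 x0B1 y1A2 y1B1 A1x0y1 _.
have -> : x0 |: (A2 :\ y1) = y0 |: ((x0 |: (A2 :\ y0)) :\ y1) by set_eq.
by apply: (basis_double_exchange hB hS) => //; set_mem.
Qed.

End TwoOutside.

Lemma improvable_two_outside A1 A2 x0 x1 y0 y1 : disjoint_bases A1 A2 ->
  x0 \in A1 -> x1 \in A1 -> x0 \notin B1 -> x1 \notin B1 -> x0 != x1 ->
  y0 \in A2 -> y1 \in A2 -> y0 \in B1 -> y1 \in B1 -> y0 != y1 -> improvable A1 A2.
Proof.
move=> hV x0A1 x1A1 x0B1 x1B1 x01 y0A2 y1A2 y0B1 y1B1 y01.
have [A1x0y0|N00] := boolP (y0 |: (A1 :\ x0) \in B); last first.
  exact: improvable_nonbasis_switch1 hV x0A1 x1A1 x0B1 x1B1 x01 y0A2 y1A2 y0B1 y1B1 y01 N00.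
have [A2y0x0|N00'] := boolP (x0 |: (A2 :\ y0) \in B).
  exact: improvable_switch12 hV x0A1 x0B1 y0A2 y0B1 A1x0y0 A2y0x0.
have [A1x0y1|N01] := boolP (y1 |: (A1 :\ x0) \in B).
  exact: improvable_nonbasis_switch2 hV x0A1 x0B1 y0A2 y1A2 y1B1 y01 N00' A1x0y1.
rewrite eq_sym in y01.
exact: improvable_nonbasis_switch1 hV x0A1 x1A1 x0B1 x1B1 x01 y1A2 y0A2 y1B1 y0B1 y01 N01.
Qed.


Lemma improvable_one_outside A1 A2 x0 y0 : disjoint_bases A1 A2 -> x0 \in A1 ->
  x0 \notin B1 -> y0 \in A2 -> y0 |: (A1 :\ x0) = B1 -> improvable A1 A2.
Proof.
move=> hV x0A1 x0B1 y0A2 eB1; have /and3P[_ A2B D12] := hV.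
have /and3P[B1B B2B D] := hVB.
have x0A2 : x0 \notin A2 by rewrite (disjointFr D12 x0A1).
have y0A1 : y0 \notin A1 by rewrite (disjointFl D12 y0A2).
have x0y0 : x0 != y0 := memPn y0A1 x0 x0A1.
have y0B1 : y0 \in B1 by rewrite -eB1 setU11.
have A1x0y0 : y0 |: (A1 :\ x0) \in B by rewrite eB1.
have [A2y0x0|N] := boolP (x0 |: (A2 :\ y0) \in B).
  exact: improvable_switch12 hV x0A1 x0B1 y0A2 y0B1 A1x0y0 A2y0x0.
case: (set_0Vmem (~: (A1 :|: A2))) => [A3_0|[z]]; last first.
  rewrite !inE negb_or => /andP[zA1 zA2].
  have x0z : x0 != z := memPn zA1 x0 x0A1.
  have y0z : y0 != z := memPn zA2 y0 y0A2.
  have A2y0z : z |: (A2 :\ y0) \in B.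
    have -> : z |: (A2 :\ y0) = z |: ((x0 |: (A2 :\ y0)) :\ x0) by set_eq.
    by apply: (basis_double_exchange hB hS) => //; set_mem.
  have [hV' c] := switch23_linked hV y0A2 zA1 zA2 A2y0z.
  apply: improvable_linked c (improvable_unused hV' x0A1 x0B1 y0B1 y0A1 _).
  by set_mem.
(* If A1 and A2 cover the ground set, x0 |: (A2 :\ y0) is the complement of B1,
   so it contains B2. *)
suff eB2 : x0 |: (A2 :\ y0) = B2 by rewrite eB2 B2B in N.
apply/eqP; rewrite eq_sym eqEcard card_setU1D1 // (basis_card hB A2B B2B) leqnn andbT.
apply/subsetP => e eB2.
have : e \in A1 :|: A2 by rewrite -[A1 :|: A2]setCK A3_0 setC0 in_setT.
have : e \notin y0 |: (A1 :\ x0) by rewrite eB1 (disjointFl D eB2).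
rewrite !inE; elem_cases e.
Qed.

Lemma improvable_step A1 A2 x0 :
  disjoint_bases A1 A2 -> x0 \in A1 -> x0 \notin B1 -> improvable A1 A2.
Proof.
move=> hV x0A1 x0B1; have /and3P[A1B _ _] := hV; have /and3P[B1B _ _] := hVB.
have [/existsP[y /and3P[yB1 yA1 yA2]]|] :=
  boolP [exists y, [&& y \in B1, y \notin A1 & y \notin A2]].
  exact: improvable_unused hV x0A1 x0B1 yB1 yA1 yA2.
rewrite negb_exists => /forallP inA2.
have {}inA2 y : y \in B1 -> y \notin A1 -> y \in A2.
  by move=> yB1 yA1; move: (inA2 y); rewrite yB1 yA1 /= negbK.
have cA1 : #|A1| = #|B1| := basis_card hB A1B B1B.
have [y0 y0B1 y0A1] : exists2 y0, y0 \in B1 & y0 \notin A1.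
  apply/subsetPn/negP => /(basis_subset_eq hB B1B A1B) eB1.
  by rewrite eB1 x0A1 in x0B1.
have [/existsP[x1 /and3P[x1A1 x1B1 x10]]|] :=
  boolP [exists x, [&& x \in A1, x \notin B1 & x != x0]].
  have : 1 < #|B1 :\: A1|.
    rewrite [#|B1 :\: A1|]cardsD setIC -cA1 -cardsD; apply/card_gt1P.
    by exists x1, x0; rewrite !inE x1A1 x1B1 x0A1 x0B1 x10.
  rewrite (cardsD1 y0) !inE y0A1 y0B1 /= add1n ltnS => /card_gt0P[y1].
  rewrite !inE => /andP[y10 /andP[y1A1 y1B1]].
  rewrite eq_sym in x10; rewrite eq_sym in y10.
  exact: improvable_two_outside hV x0A1 x1A1 x0B1 x1B1 x10
    (inA2 _ y0B1 y0A1) (inA2 _ y1B1 y1A1) y0B1 y1B1 y10.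
rewrite negb_exists => /forallP one.
apply: (improvable_one_outside hV x0A1 x0B1 (inA2 _ y0B1 y0A1)).
apply/eqP; rewrite eqEcard card_setU1D1 // cA1 leqnn andbT.
apply/subsetP => e; rewrite !inE => /orP[/eqP -> //|/andP[ex0 eA1]].
apply: contraNT ex0 => eB1; move: (one e); rewrite eA1 eB1 /=.
by rewrite negbK.
Qed.

Lemma linked_second_target A2 :
  disjoint_bases B1 A2 -> linked (bpg_vtx B1 A2) (bpg_vtx B1 B2).
Proof.
have /and3P[_ B2B D] := hVB.
have [n] := ubnP #|A2 :\: B2|; elim: n A2 => // n IH A2 lt hV.
have /and3P[_ A2B _] := hV.
have [sub|/subsetPn[x xA2 xB2]] := boolP (A2 \subset B2).
  by rewrite (basis_subset_eq hB A2B B2B sub) connect0.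
have xD : x \in A2 :\: B2 by rewrite inE xB2.
have [y /setDP[yB2 yA2] A2'B] := hB.2 A2 B2 x A2B B2B xD.
have yB1 : y \notin B1 by rewrite (disjointFl D yB2).
have [hV' c] := switch23_linked hV xA2 yB1 yA2 A2'B.
apply: connect_trans c (IH _ _ hV'); move: lt; rewrite ltnS; apply: leq_trans.
by apply: card_lt_subD1 xD _; set_sub.
Qed.

Lemma linked_target A1 A2 :
  disjoint_bases A1 A2 -> linked (bpg_vtx A1 A2) (bpg_vtx B1 B2).
Proof.
have /and3P[B1B _ _] := hVB.
have [n] := ubnP #|A1 :\: B1|; elim: n A1 A2 => // n IH A1 A2 lt hV.
have /and3P[A1B _ _] := hV.
have [sub|/subsetPn[x xA1 xB1]] := boolP (A1 \subset B1).
  by rewrite (basis_subset_eq hB A1B B1B sub) in hV *; exact: linked_second_target.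
have [A1' [A2' [hV' c lt']]] := improvable_step hV xA1 xB1.
by apply: connect_trans c (IH _ _ _ hV'); apply: leq_trans lt' _; rewrite -ltnS.
Qed.

End TowardsTarget.
End BasisPairGraph.

Theorem theorem2p3 (T : finType) (B : {set {set T}}) :
  matroid_bases B -> sparse_paving B -> bpg_connected B.
Proof.
move=> hB hS [[A1 A2] _] [[B1 B2] _] /and4P[A1B A2B DA /eqP->] /and4P[B1B B2B DB /eqP->].
have hVA : disjoint_bases B A1 A2 by apply/and3P.
have hVB : disjoint_bases B B1 B2 by apply/and3P.
exact: (linked_target hB hS hVB hVA).
Qed.
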